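(* Let $d\geq 2$ and let $n_1\geq n_2\geq\cdots\geq n_d\geq 2$ be integers, and let $G=\textsc{Grid}(n_1,\ldots,n_d)$. Then $G$ admits a $Q_d$-magic vertex labeling $f$ and a $Q_d$-magic edge labeling $g$.
   Context: For integers $k\le \ell$, $[k]=\{1,\ldots,k\}$. The grid graph $\textsc{Grid}(n_1,\ldots,n_d)$ has vertex set $V=[n_1]\times\cdots\times[n_d]$ and edge set $E=\{\{\mathbf x,\mathbf y\}: \mathbf x,\mathbf y\in V,\ \sum_{i=1}^d|x_i-y_i|=1\}$ (the Cartesian product of $d$ paths with $n_1,\ldots,n_d$ vertices). The $d$-cube $Q_d$ is $\textsc{Grid}(2,\ldots,2)$ ($d$ entries). For graphs $G=(V,E)$ and $H$: a bijection $f:V\to\{1,\ldots,|V|\}$ is an $H$-magic vertex labeling if there is a constant $c$ with $\sum_{v\in V(H')}f(v)=c$ for every subgraph $H'\subseteq G$ isomorphic to $H$; a bijection $g:E\to\{1,\ldots,|E|\}$ is an $H$-magic edge labeling if there is a constant $c'$ with $\sum_{e\in E(H')}g(e)=c'$ for every subgraph $H'\subseteq G$ isomorphic to $H$. The constants $c$, $c'$ are called the $H$-magic sums. *)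

From mathcomp Require Import all_boot.
Set Implicit Arguments. Unset Strict Implicit. Unset Printing Implicit Defensive.

(* Vertices of Grid(n_1,...,n_d): coordinate i ranges over 'I_(n i) = {0..n i - 1}
   (0-based shift of [n_i]; adjacency only depends on coordinate differences). *)
Definition grid_V (d : nat) (n : 'I_d -> nat) : finType :=
  {dffun forall i : 'I_d, 'I_(n i)}.

Definition distn (a b : nat) : nat := (a - b) + (b - a).

Definition grid_adj d (n : 'I_d -> nat) (x y : grid_V n) : bool :=
  \sum_(i < d) distn (x i) (y i) == 1.

Definition grid_E d (n : 'I_d -> nat) : {set {set grid_V n}} :=
  [set [set p.1; p.2] | p in [set p : grid_V n * grid_V n | grid_adj p.1 p.2]].

Definition cube_dims (d : nat) : 'I_d -> nat := fun _ => 2.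
Arguments cube_dims d : clear implicits.
Definition Q_V (d : nat) : finType := grid_V (cube_dims d).
Definition Q_E (d : nat) : {set {set Q_V d}} := grid_E (cube_dims d).

Definition iso_subgraph (V W : finType) (E : {set {set V}}) (EH : {set {set W}})
  (Vs : {set V}) (Es : {set {set V}}) : Prop :=
  [/\ Es \subset E,
      (forall e, e \in Es -> e \subset Vs) &
      exists phi : W -> V,
        [/\ injective phi, phi @: [set: W] = Vs &
            forall a b : W, ([set phi a; phi b] \in Es) = ([set a; b] \in EH)]].

Definition magic_vertex_labeling (V W : finType) (E : {set {set V}}) (EH : {set {set W}})
  (f : V -> nat) : Prop :=
  [/\ injective f, (forall v, 1 <= f v <= #|[set: V]|) &
      exists c, forall Vs Es, iso_subgraph E EH Vs Es -> \sum_(v in Vs) f v = c].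

Definition magic_edge_labeling (V W : finType) (E : {set {set V}}) (EH : {set {set W}})
  (g : {set V} -> nat) : Prop :=
  [/\ {in E &, injective g}, (forall e, e \in E -> 1 <= g e <= #|E|) &
      exists c', forall Vs Es, iso_subgraph E EH Vs Es -> \sum_(e in Es) g e = c'].

From mathcomp Require Import all_boot zify.
Set Implicit Arguments. Unset Strict Implicit. Unset Printing Implicit Defensive.

(* A copy of [Q_d] in the grid meets, at each of its vertices, each of the [d] grid axes exactly
   once: two cube neighbours of a vertex along the same axis would have only that vertex as a
   common neighbour in the grid, while in the cube they have two.  Hence, for every axis [t], the
   copy's edges along [t] form a perfect matching of its [2^d] vertices, and a sum over the copy is
   constant as soon as, along some axis, the two ends of every edge contribute a constant total.

   Vertices are numbered in mixed radix after a "twist" that mirrors coordinate [al] according to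
   the parity of coordinate [be], and every other coordinate according to the parity of the new
   [al]-coordinate: each twisted coordinate [i] takes complementary values (adding up to
   [n_i - 1]) at the ends of the edges along [be] (if [i = al]) or along [al] (otherwise).
   For [d >= 3], the edges along [t] receive a block of consecutive labels, numbered by the same
   twisted code of their lower end, with [al], [be] chosen distinct from [t]; twice such a label is
   then, up to a constant, the sum of two vertex values of the previous kind.  For [d = 2], an
   explicit labeling is used whose identities along the two axes cancel each other. *)

Lemma distnC a b : distn a b = distn b a.
Proof. by rewrite /distn addnC. Qed.

Lemma distnn a : distn a a = 0.
Proof. by rewrite /distn subnn. Qed.

Lemma distnS a : distn a a.+1 = 1.
Proof. by rewrite /distn; lia. Qed.

Lemma leq_sum_subpred (I : finType) (P P' : pred I) (F : I -> nat) :
  (forall i, P i -> P' i) -> \sum_(i | P i) F i <= \sum_(i | P' i) F i.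
Proof. exact: (sub_le_big leqnn (fun m n => leq_addr n m)). Qed.

Lemma big_set2 (T : finType) (F : T -> nat) (x y : T) : x != y ->
  \sum_(v in [set x; y]) F v = F x + F y.
Proof. by move=> xy; rewrite big_setU1 ?big_set1 // inE. Qed.

Lemma eq_set2 (T : finType) (x y u w : T) : x != y -> [set x; y] = [set u; w] ->
  (u = x /\ w = y) \/ (u = y /\ w = x).
Proof.
move=> xy E.
have /set2P u_xy : u \in [set x; y] by rewrite E set21.
have /set2P w_xy : w \in [set x; y] by rewrite E set22.
move: E; case: u_xy => ->; case: w_xy => -> E.
- have /set2P yx : y \in [set x; x] by rewrite -E set22.
  by move: xy; case: yx => ->; rewrite eqxx.
- by left; split.
- by right; split.
- have /set2P xy' : x \in [set y; y] by rewrite -E set21.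
  by move: xy; case: xy' => ->; rewrite eqxx.
Qed.

Section Grid.
Variables (d : nat) (n : 'I_d -> nat).
Local Notation V := (grid_V n).

Lemma grid_V_eq (x y : V) : (forall i, (x i : nat) = y i) -> x = y.
Proof. by move=> xy; apply/ffunP => i; apply/val_inj/xy. Qed.

Lemma grid_adj_axis (x y : V) : grid_adj x y ->
  exists t, distn (x t) (y t) = 1 /\ forall s, s != t -> (x s : nat) = y s.
Proof.
move=> /sum_nat_eq1 [t [_ xy1 xy0]]; exists t; split => // s /xy0 /(_ isT).
by rewrite /distn; lia.
Qed.

Lemma grid_adjC (x y : V) : grid_adj x y = grid_adj y x.
Proof. by rewrite /grid_adj; under eq_bigr do rewrite distnC. Qed.

Lemma grid_adj_neq (x y : V) : grid_adj x y -> x != y.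
Proof. by move=> /grid_adj_axis [t [xy _]]; apply: contra_eqN xy => /eqP ->; rewrite distnn. Qed.

Lemma grid_E_set2 (x y : V) : grid_adj x y -> [set x; y] \in grid_E n.
Proof. by move=> xy; apply/imsetP; exists (x, y); rewrite ?inE. Qed.

Lemma grid_E_adj e : e \in grid_E n -> exists x y, grid_adj x y /\ e = [set x; y].
Proof. by case/imsetP => p; rewrite inE => xy ->; exists p.1, p.2. Qed.

Lemma grid_adj_set2 (x y : V) : x != y -> [set x; y] \in grid_E n -> grid_adj x y.
Proof.
move=> xy /grid_E_adj [u [w [uw E]]].
by move: uw; case: (eq_set2 xy E) => [[-> ->] | [-> ->]]; rewrite // grid_adjC.
Qed.

Definition grid_succ (x : V) (t : 'I_d) : V :=
  [ffun i => if i == t then insubd (x i) (x i).+1 else x i].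

Lemma grid_succE (x : V) t i : (x t).+1 < n t ->
  (grid_succ x t i : nat) = if i == t then (x i).+1 else x i.
Proof. by move=> xt; rewrite ffunE; case: ifP => // /eqP ->; rewrite val_insubd xt. Qed.

Lemma grid_succ_adj (x : V) t : (x t).+1 < n t -> grid_adj x (grid_succ x t).
Proof.
move=> xt; rewrite /grid_adj (bigD1 t) //= big1 => [|i ti].
  by rewrite grid_succE // eqxx distnS.
by rewrite grid_succE // (negbTE ti) distnn.
Qed.

Lemma grid_succ_neq (x : V) t : (x t).+1 < n t -> x != grid_succ x t.
Proof. by move/grid_succ_adj/grid_adj_neq. Qed.

Lemma grid_succ_set2_inj (x x' : V) t t' : (x t).+1 < n t -> (x' t').+1 < n t' ->
  [set x; grid_succ x t] = [set x'; grid_succ x' t'] -> t = t' /\ x = x'.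
Proof.
move=> xt xt' E; case: (eq_set2 (grid_succ_neq xt) E) => [[ex es] | [ex es]].
- subst x'; split => //; case: (eqVneq t t') => // tt'; exfalso.
  have := congr1 (fun f : V => (f t : nat)) es.
  by rewrite !grid_succE // eqxx (negbTE tt'); lia.
- have a1 : (x' t : nat) = (x t).+1 by rewrite ex grid_succE // eqxx.
  have a2 : (x t' : nat) = (x' t').+1 by rewrite -es grid_succE // eqxx.
  case: (eqVneq t t') => [tt' | tt']; first by subst t'; lia.
  have : (x' t' : nat) = x t' by rewrite ex grid_succE // eq_sym (negbTE tt').
  lia.
Qed.

Lemma grid_E_succ e : e \in grid_E n ->
  exists t (x : V), (x t).+1 < n t /\ e = [set x; grid_succ x t].
Proof.
move=> /grid_E_adj [x [y [xy ->]]]; have [t [xyt xys]] := grid_adj_axis xy.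
have succ_eq (u w : V) : (u t : nat) = (w t).+1 -> (forall s, s != t -> (u s : nat) = w s) ->
    u = grid_succ w t.
  move=> ut us; apply: grid_V_eq => i; have wt : (w t).+1 < n t by rewrite -ut.
  by rewrite grid_succE //; case: eqP => [-> // | /eqP /us].
exists t; case: (ltnP (x t) (y t)) => xyt'.
- exists x; have yt := ltn_ord (y t); have ey : (y t : nat) = (x t).+1.
    by move: xyt; rewrite /distn; lia.
  split; first by lia.
  by rewrite (succ_eq y x) // => s /xys.
- exists y; have xt := ltn_ord (x t); have ex : (x t : nat) = (y t).+1.
    by move: xyt; rewrite /distn; lia.
  split; first by lia.
  by rewrite setUC (succ_eq x y).
Qed.

Lemma grid_square (x y z w : V) t :
  grid_adj x y -> grid_adj x z -> y != z ->
  (forall s, s != t -> (x s : nat) = y s) ->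
  (forall s, s != t -> (x s : nat) = z s) ->
  grid_adj w y -> grid_adj w z -> w = x.
Proof.
move=> axy axz yz hy hz awy awz.
have dt (u : V) : grid_adj x u -> (forall s, s != t -> (x s : nat) = u s) ->
    distn (x t) (u t) = 1.
  move=> /grid_adj_axis [t1 [e1 e2]] hu; case: (eqVneq t1 t) => [<- // | ne].
  by move: e1; rewrite hu // /distn; lia.
have dy := dt _ axy hy; have dz := dt _ axz hz.
have yzt : (y t : nat) != z t.
  apply: contra yz => /eqP e; apply/eqP/grid_V_eq => i.
  by case: (eqVneq i t) => [-> // | ne]; rewrite -hy // -hz.
move: awy awz => /grid_adj_axis [s1 [f1 g1]] /grid_adj_axis [s2 [f2 g2]].
have s1t : s1 = t.
  case: (eqVneq s1 t) => // ne1.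
  have wt1 : (w t : nat) = y t by apply: g1; rewrite eq_sym.
  case: (eqVneq s2 t) => [es2 | ne2].
    by subst s2; move: f2 dy dz yzt; rewrite wt1 /distn; lia.
  have wt2 : (w t : nat) = z t by apply: g2; rewrite eq_sym.
  by move: yzt; rewrite -wt1 -wt2 eqxx.
have s2t : s2 = t.
  case: (eqVneq s2 t) => // ne2.
  have wt2 : (w t : nat) = z t by apply: g2; rewrite eq_sym.
  by subst s1; move: f1 dy dz yzt; rewrite wt2 /distn; lia.
subst s1 s2; apply: grid_V_eq => i; case: (eqVneq i t) => [-> | ne].
  by move: f1 f2 dy dz yzt; rewrite /distn; lia.
by rewrite g1 // hy.
Qed.

Definition along (t : 'I_d) (e : {set V}) := [exists x in e, exists y in e, (x t : nat) != y t].

Lemma along_set2 (x y : V) s t : grid_adj x y -> distn (x s) (y s) = 1 ->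
  along t [set x; y] = (t == s).
Proof.
move=> /grid_adj_axis [s' [xys' xy]] xys.
have -> : s = s'.
  by apply: contraPeq xys => /xy ->; rewrite distnn.
apply/existsP/eqP => [[u /andP [/set2P xu /existsP [w /andP [/set2P yw dif]]]] | ->].
  case: (eqVneq t s') => // ts; move: dif.
  by case: xu yw => -> [] ->; rewrite ?xy // eqxx.
exists x; rewrite set21 /=; apply/existsP; exists y; rewrite set22 /=.
by apply: contraPneq xys' => ->; rewrite distnn.
Qed.

Lemma along_succ (x : V) s t : (x s).+1 < n s -> along t [set x; grid_succ x s] = (t == s).
Proof.
by move=> xs; rewrite (@along_set2 _ _ s _ (grid_succ_adj xs)) // grid_succE // eqxx distnS.
Qed.

Lemma grid_E_along e t : e \in grid_E n -> along t e ->
  exists x : V, (x t).+1 < n t /\ e = [set x; grid_succ x t].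
Proof.
move=> /grid_E_succ [s [x [xs ->]]]; rewrite along_succ // => /eqP ->.
by exists x.
Qed.

Lemma card_grid : #|V| = \prod_(i < d) n i.
Proof.
rewrite card_dep_ffun foldrE big_map big_enum /=.
by apply: eq_bigr => i _; rewrite card_ord.
Qed.

Definition coords (x : V) : 'I_d -> nat := fun i => x i.

Lemma coords_lt (x : V) i : coords x i < n i.
Proof. exact: ltn_ord. Qed.

Lemma coords_succ (x : V) t : (x t).+1 < n t ->
  (forall s, s != t -> coords (grid_succ x t) s = coords x s) /\
  coords (grid_succ x t) t = (coords x t).+1.
Proof. by move=> xt; split => [s st|]; rewrite /coords grid_succE // ?(negbTE st) ?eqxx. Qed.

End Grid.

Section Cube.
Variable d : nat.
Local Notation Q := (Q_V d).

Definition cube_flip (a : Q) (k : 'I_d) : Q :=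
  [ffun i => if i == k then rev_ord (a i) else a i].

Lemma cube_lt2 (a : Q) i : (a i : nat) < 2.
Proof. exact: ltn_ord. Qed.

Lemma cube_flipE (a : Q) k i : (cube_flip a k i : nat) = if i == k then 1 - a i else a i.
Proof. by rewrite ffunE; case: ifP. Qed.

Lemma cube_flip_at (a : Q) k : (cube_flip a k k : nat) = 1 - a k.
Proof. by rewrite cube_flipE eqxx. Qed.

Lemma cube_adj_flip (a : Q) k : grid_adj a (cube_flip a k).
Proof.
rewrite /grid_adj (bigD1 k) //= big1 => [|i ik].
  by apply/eqP; rewrite cube_flip_at; move: (cube_lt2 a k); set m := nat_of_ord _; rewrite /distn; lia.
by rewrite cube_flipE (negbTE ik) distnn.
Qed.

Lemma cube_adj_eq_flip (a b : Q) : grid_adj a b -> exists k, b = cube_flip a k.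
Proof.
move=> /grid_adj_axis [k [ab1 ab]]; exists k; apply: grid_V_eq => i.
rewrite cube_flipE; case: eqP => [-> | /eqP /ab //].
move: ab1 (cube_lt2 a k) (cube_lt2 b k); rewrite /distn.
by set m := nat_of_ord (a k); set m' := nat_of_ord (b k); lia.
Qed.

Lemma cube_flipK (a : Q) k : cube_flip (cube_flip a k) k = a.
Proof. by apply/ffunP => i; rewrite !ffunE; case: eqP => // ->; rewrite rev_ordK. Qed.

Lemma cube_flipC (a : Q) k j : cube_flip (cube_flip a k) j = cube_flip (cube_flip a j) k.
Proof. by apply/ffunP => i; rewrite !ffunE; do 2 case: ifP => //. Qed.

Lemma cube_flip_neq (a : Q) k : cube_flip a k != a.
Proof.
apply: contra_neq (_ : (cube_flip a k k : nat) != a k) => [-> //|].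
by rewrite cube_flip_at; move: (cube_lt2 a k); set m := nat_of_ord _; lia.
Qed.

Lemma cube_flip_inj (a : Q) k j : k != j -> cube_flip a k != cube_flip a j.
Proof.
move=> kj; apply: contra_neq (_ : (cube_flip a k k : nat) != cube_flip a j k) => [-> //|].
rewrite !cube_flipE eqxx (negbTE kj).
by move: (cube_lt2 a k); set m := nat_of_ord _; lia.
Qed.

Lemma cube_flip2_neq (a : Q) k j : k != j -> cube_flip (cube_flip a k) j != a.
Proof.
move=> kj; apply: contra_neq (cube_flip_inj a kj) => eq_a.
by rewrite -[in RHS]eq_a cube_flipK.
Qed.

End Cube.

Section Copy.
Variables (d : nat) (n : 'I_d -> nat).
Local Notation V := (grid_V n).
Local Notation Q := (Q_V d).
Variables (Vs : {set V}) (Es : {set {set V}}).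

Definition axis_edges t := [set e in Es | along t e].

Section CopyMap.
Variable phi : Q -> V.
Hypotheses (Es_sub : Es \subset grid_E n)
  (Es_Vs : forall e, e \in Es -> e \subset Vs)
  (phi_inj : injective phi) (phi_Vs : phi @: [set: Q] = Vs)
  (phi_E : forall a b : Q, ([set phi a; phi b] \in Es) = ([set a; b] \in Q_E d)).

Lemma copy_edge (a : Q) k : [set phi a; phi (cube_flip a k)] \in Es.
Proof. by rewrite phi_E grid_E_set2 // cube_adj_flip. Qed.

Lemma copy_adj (a : Q) k : grid_adj (phi a) (phi (cube_flip a k)).
Proof.
apply: grid_adj_set2; last exact: (subsetP Es_sub _ (copy_edge a k)).
by rewrite (inj_eq phi_inj) eq_sym cube_flip_neq.
Qed.

Lemma copy_vertex v : v \in Vs -> exists a, v = phi a.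
Proof. by rewrite -phi_Vs => /imsetP [a _ ->]; exists a. Qed.

Lemma copy_edge_at e a : e \in Es -> phi a \in e ->
  exists k, e = [set phi a; phi (cube_flip a k)].
Proof.
move=> eEs ae; have [x [y [xy ee]]] := grid_E_adj (subsetP Es_sub _ eEs).
have [b xb] : exists b, x = phi b by apply/copy_vertex/(subsetP (Es_Vs eEs)); rewrite ee set21.
have [c yc] : exists c, y = phi c by apply/copy_vertex/(subsetP (Es_Vs eEs)); rewrite ee set22.
subst x y; have bc : b != c by move: (grid_adj_neq xy); apply: contra_neq => ->.
have bcQ : [set b; c] \in Q_E d by rewrite -phi_E -ee.
have [k ck] := cube_adj_eq_flip (grid_adj_set2 bc bcQ); subst c.
move: ae; rewrite ee => /set2P [] /phi_inj ab; subst a; exists k => //.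
by rewrite cube_flipK setUC.
Qed.

Definition copy_axis (a : Q) (k : 'I_d) : 'I_d :=
  odflt k [pick t | (phi a t : nat) != phi (cube_flip a k) t].

Lemma copy_axis_spec a k : distn (phi a (copy_axis a k)) (phi (cube_flip a k) (copy_axis a k)) = 1
  /\ forall s, s != copy_axis a k -> (phi a s : nat) = phi (cube_flip a k) s.
Proof.
have [t [at1 ats]] := grid_adj_axis (copy_adj a k).
suff -> : copy_axis a k = t by [].
rewrite /copy_axis; case: pickP => [s /= as_ | none].
  by apply: contraNeq as_ => /ats ->.
by move: at1; have /negbFE/eqP -> := none t; rewrite distnn.
Qed.

Lemma along_copy_edge a k t :
  along t [set phi a; phi (cube_flip a k)] = (t == copy_axis a k).
Proof. exact: along_set2 (copy_adj a k) (copy_axis_spec a k).1. Qed.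

Lemma copy_axis_inj a : injective (copy_axis a).
Proof.
move=> k j e; apply: contraTeq isT => kj.
have [_ ak] := copy_axis_spec a k; have [_ aj] := copy_axis_spec a j; rewrite -e in aj.
have := grid_square (copy_adj a k) (copy_adj a j) _ ak aj.
move=> /(_ (phi (cube_flip (cube_flip a k) j))).
rewrite (inj_eq phi_inj) cube_flip_inj // grid_adjC copy_adj cube_flipC grid_adjC copy_adj.
by move=> /(_ isT isT isT) /phi_inj /eqP; rewrite cube_flipC (negbTE (cube_flip2_neq a kj)).
Qed.

Lemma copy_axis_surj a t : exists k, copy_axis a k = t.
Proof.
have /codomP [k ->] := inj_card_onto (copy_axis_inj (a := a)) (leqnn _) t.
by exists k.
Qed.

Lemma cover_axis_edges t : cover (axis_edges t) = Vs.
Proof.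
apply/setP => v; apply/bigcupP/idP => [[e] | /copy_vertex [a ->]].
  by rewrite inE => /andP [eEs _]; apply: (subsetP (Es_Vs eEs)).
have [k ak] := copy_axis_surj a t.
exists [set phi a; phi (cube_flip a k)]; last by rewrite set21.
by rewrite inE copy_edge along_copy_edge ak eqxx.
Qed.

Lemma trivIset_axis_edges t : trivIset (axis_edges t).
Proof.
apply/trivIsetP => e e'; rewrite !inE => /andP [eEs et] /andP [e'Es e't] ee'.
rewrite -setI_eq0; apply/eqP/setP => v; rewrite !inE; apply/negP => /andP [ve ve'].
have [a ea] := copy_vertex (subsetP (Es_Vs eEs) _ ve); subst v.
have [k ek] := copy_edge_at eEs ve; have [j ej] := copy_edge_at e'Es ve'; subst e e'.
move: et e't ee'; rewrite !along_copy_edge => /eqP tk /eqP tj.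
have -> : k = j by apply: (@copy_axis_inj a); rewrite -tk -tj.
by rewrite eqxx.
Qed.

End CopyMap.

Hypothesis copy : iso_subgraph (grid_E n) (Q_E d) Vs Es.

Lemma copy_E_sub : Es \subset grid_E n.
Proof. by case: copy. Qed.

Lemma card_copy : #|Vs| = #|Q|.
Proof. by case: copy => _ _ [phi [phi_inj <- _]]; rewrite card_imset // cardsT. Qed.

Lemma axis_edge_succ t e : e \in axis_edges t ->
  exists x : V, (x t).+1 < n t /\ e = [set x; grid_succ x t].
Proof. by rewrite inE => /andP [eEs et]; apply: grid_E_along (subsetP copy_E_sub _ eEs) et. Qed.

Lemma sum_axis_edges_set (F : V -> nat) t :
  \sum_(e in axis_edges t) \sum_(v in e) F v = \sum_(v in Vs) F v.
Proof.
have [Es_sub Es_Vs [phi [phi_inj phi_Vs phi_E]]] := copy.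
rewrite -(cover_axis_edges Es_sub Es_Vs phi_inj phi_Vs phi_E t) big_trivIset //.
exact: trivIset_axis_edges Es_sub Es_Vs phi_inj phi_Vs phi_E t.
Qed.

Lemma sum_axis_edges t (G : {set V} -> nat) (F : V -> nat) :
  (forall x : V, (x t).+1 < n t -> G [set x; grid_succ x t] = F x + F (grid_succ x t)) ->
  \sum_(e in axis_edges t) G e = \sum_(v in Vs) F v.
Proof.
move=> GF; rewrite -(sum_axis_edges_set _ t).
apply: eq_bigr => e /axis_edge_succ [x [xt ->]].
by rewrite GF // big_set2 // grid_succ_neq.
Qed.

Lemma card_axis_edges t : #|axis_edges t| = #|Q| %/ 2.
Proof.
have := @sum_axis_edges t (fun _ => 2) (fun _ => 1) (fun _ _ => erefl).
by rewrite sum_nat_const sum1_card card_copy => <-; rewrite mulnC mulKn.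
Qed.

Lemma sum_copy_edges (G : {set V} -> nat) :
  \sum_(e in Es) G e = \sum_(t < d) \sum_(e in axis_edges t) G e.
Proof.
rewrite (exchange_big_dep (mem Es)) /=; last by move=> t e _; rewrite inE => /andP [].
apply: eq_bigr => e eEs; have [x [y [xy ee]]] := grid_E_adj (subsetP copy_E_sub _ eEs).
have [s [xys _]] := grid_adj_axis xy.
rewrite (bigD1 s) /=; last by rewrite inE eEs ee (along_set2 _ xy xys) eqxx.
rewrite big1 ?addn0 // => t /andP [].
by rewrite inE eEs ee (along_set2 _ xy xys) => /eqP ->; rewrite eqxx.
Qed.

End Copy.

Lemma radix_sum_lt (r z : nat -> nat) k : (forall i, i < k -> z i < r i) ->
  \sum_(i < k) z i * \prod_(j < i) r j < \prod_(j < k) r j.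
Proof.
elim: k => [|k IHk] zr; first by rewrite !big_ord0.
rewrite big_ord_recr [X in _ < X]big_ord_recr /=.
have := IHk (fun i ik => zr i (ltnW ik)); have := zr k (ltnSn k).
set S := \sum_(i < k) _; set P := \prod_(j < k) _; nia.
Qed.

Lemma radix_sum_inj (r z z' : nat -> nat) k :
  (forall i, i < k -> z i < r i) -> (forall i, i < k -> z' i < r i) ->
  \sum_(i < k) z i * \prod_(j < i) r j = \sum_(i < k) z' i * \prod_(j < i) r j ->
  forall i, i < k -> z i = z' i.
Proof.
elim: k => [//|k IHk] zr z'r; rewrite !big_ord_recr /=.
have lt := radix_sum_lt (fun i ik => zr i (ltnW ik)).
have lt' := radix_sum_lt (fun i ik => z'r i (ltnW ik)).
set S := \sum_(i < k) _ in lt *; set S' := \sum_(i < k) _ in lt' *.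
set P := \prod_(j < k) _ in lt lt' *.
rewrite ![S + _]addnC ![S' + _]addnC => /(congr1 (edivn^~ P)).
rewrite !edivn_eq // => -[zk SS'].
move=> i; rewrite ltnS leq_eqVlt => /orP [/eqP -> // | ik].
exact: IHk (fun i ik => zr i (ltnW ik)) (fun i ik => z'r i (ltnW ik)) SS' i ik.
Qed.

Section MixedRadix.
Variable d : nat.
Implicit Types r z : 'I_d -> nat.

(* [r] extended by [0] beyond [d], so that radix products can be indexed by [nat]. *)
Definition extn r (j : nat) : nat := if insub j is Some i then r i else 0.

Lemma extnE r (i : 'I_d) : extn r i = r i.
Proof. by rewrite /extn valK. Qed.

Definition radix_weight r (i : nat) := \prod_(j < i) extn r j.

Definition mixed_radix r z := \sum_(i < d) z i * radix_weight r i.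

Lemma mixed_radixE r z : mixed_radix r z = \sum_(i < d) extn z i * \prod_(j < i) extn r j.
Proof. by apply: eq_bigr => i _; rewrite extnE. Qed.

Lemma mixed_radix_lt r z : (forall i, z i < r i) -> mixed_radix r z < \prod_(i < d) r i.
Proof.
move=> zr; have -> : \prod_(i < d) r i = \prod_(i < d) extn r i.
  by apply: eq_bigr => i _; rewrite extnE.
rewrite mixed_radixE.
by apply: radix_sum_lt => i id; rewrite -[i]/(val (Ordinal id)) !extnE.
Qed.

Lemma mixed_radix_inj r z z' : (forall i, z i < r i) -> (forall i, z' i < r i) ->
  mixed_radix r z = mixed_radix r z' -> forall i, z i = z' i.
Proof.
move=> zr z'r; rewrite !mixed_radixE => /radix_sum_inj E i; rewrite -(extnE z) -(extnE z').
by apply: E => // j jd; rewrite -[j]/(val (Ordinal jd)) !extnE.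
Qed.

End MixedRadix.

Definition mirror (m k : nat) (b : bool) := if b then m.-1 - k else k.

Lemma mirror_lt m k b : k < m -> mirror m k b < m.
Proof. by rewrite /mirror; case: b; lia. Qed.

Lemma mirror_inj m k k' b : k < m -> k' < m -> mirror m k b = mirror m k' b -> k = k'.
Proof. by rewrite /mirror; case: b; lia. Qed.

Lemma mirrorN m k b : k < m -> mirror m k b + mirror m k (~~ b) = m.-1.
Proof. by rewrite /mirror; case: b => /=; lia. Qed.

Lemma mirrorS m k b : k.+1 < m -> mirror m k b + mirror m k.+1 b = (mirror m.-1 k b).*2.+1.
Proof. by rewrite /mirror; case: b; lia. Qed.

Lemma odd_mirrorS m k b : k.+1 < m -> odd (mirror m k.+1 b) = ~~ odd (mirror m k b).
Proof.
rewrite /mirror; case: b => mk; last by rewrite oddS.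
by rewrite -[m.-1 - k](_ : (m.-1 - k.+1).+1 = _) ?oddS ?negbK //; lia.
Qed.

Section Twist.
Variable d : nat.
Implicit Types (r v : 'I_d -> nat) (al be : 'I_d).

Definition twist_lead r al be v := mirror (r al) (v al) (odd (v be)).
Definition twist r al be v (i : 'I_d) :=
  if i == al then twist_lead r al be v else mirror (r i) (v i) (odd (twist_lead r al be v)).

Definition lower_dims r (t i : 'I_d) : nat := if i == t then (r i).-1 else r i.

Lemma twist_lt r al be v : (forall i, v i < r i) -> forall i, twist r al be v i < r i.
Proof. by move=> vr i; rewrite /twist /twist_lead; case: ifP => [/eqP -> | _]; apply: mirror_lt. Qed.

Lemma twist_inj r al be v v' : al != be ->
  (forall i, v i < r i) -> (forall i, v' i < r i) ->
  (forall i, twist r al be v i = twist r al be v' i) -> forall i, v i = v' i.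
Proof.
move=> alb vr v'r E.
have lead : twist_lead r al be v = twist_lead r al be v' by have := E al; rewrite /twist eqxx.
have off_al i : i != al -> v i = v' i.
  by move=> ial; move: (E i); rewrite /twist (negbTE ial) lead; exact: mirror_inj (vr i) (v'r i).
move=> i; case: (eqVneq i al) => [-> | /off_al //].
by move: lead; rewrite /twist_lead (off_al be) 1?eq_sym //; exact: mirror_inj (vr al) (v'r al).
Qed.

Lemma twist_step_be r al be v v' : al != be ->
  (forall s, s != be -> v' s = v s) -> v' be = (v be).+1 -> v al < r al ->
  twist r al be v al + twist r al be v' al = (r al).-1.
Proof.
by move=> alb v'v v'be val; rewrite /twist eqxx /twist_lead v'be v'v // oddS mirrorN.
Qed.

Lemma twist_step_al r al be v v' i : al != be -> i != al ->
  (forall s, s != al -> v' s = v s) -> v' al = (v al).+1 -> (v al).+1 < r al -> v i < r i ->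
  twist r al be v i + twist r al be v' i = (r i).-1.
Proof.
move=> alb ial v'v v'al valS vi.
rewrite /twist (negbTE ial) v'v // /twist_lead v'al v'v 1?eq_sym //.
by rewrite odd_mirrorS // mirrorN.
Qed.

Lemma twist_step_other r al be v v' t i : al != t -> be != t ->
  (forall s, s != t -> v' s = v s) -> v' t = (v t).+1 -> (v t).+1 < r t ->
  twist r al be v i + twist r al be v' i =
  (twist (lower_dims r t) al be v i).*2 + (i == t).
Proof.
move=> alt bet v'v v'tS vtS.
have lead : twist_lead r al be v' = twist_lead r al be v by rewrite /twist_lead !v'v.
have lead' : twist_lead (lower_dims r t) al be v = twist_lead r al be v.
  by rewrite /twist_lead /lower_dims (negbTE alt).
rewrite /twist lead lead'; case: (eqVneq i al) => [-> | ial].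
  by rewrite (negbTE alt) addn0 -addnn.
rewrite /lower_dims; case: (eqVneq i t) => [-> | it]; first by rewrite v'tS mirrorS // addn1.
by rewrite v'v // addn0 -addnn.
Qed.

End Twist.

Section VertexLabel.
Variables (d : nat) (n : 'I_d -> nat) (al be : 'I_d).
Hypothesis al_be : al != be.
Local Notation V := (grid_V n).

Lemma twist_coords_lt (x : V) i : twist n al be (coords x) i < n i.
Proof. exact: (twist_lt al be (@coords_lt _ _ x) i). Qed.

Definition vertex_label (x : V) := 1 + mixed_radix n (twist n al be (coords x)).

Lemma sum_twist_copy Vs Es : iso_subgraph (grid_E n) (Q_E d) Vs Es -> forall i,
  \sum_(v in Vs) twist n al be (coords v) i = (n i).-1 * (#|Q_V d| %/ 2).
Proof.
move=> copy i.
have [t pair] : exists t, forall x : V, (x t).+1 < n t ->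
    (n i).-1 = twist n al be (coords x) i + twist n al be (coords (grid_succ x t)) i.
  case: (eqVneq i al) => [-> | ial]; [exists be | exists al] => x xt;
    have [xs xt'] := coords_succ xt.
  - by rewrite twist_step_be // coords_lt.
  - by rewrite twist_step_al // coords_lt.
have := sum_axis_edges copy (G := fun _ => (n i).-1) pair.
by rewrite sum_nat_const (card_axis_edges copy) mulnC => <-.
Qed.

Lemma sum_mixed_radix_twist_copy (w : 'I_d -> nat) Vs Es :
  iso_subgraph (grid_E n) (Q_E d) Vs Es ->
  \sum_(v in Vs) mixed_radix w (twist n al be (coords v)) =
  \sum_(i < d) (n i).-1 * (#|Q_V d| %/ 2) * radix_weight w i.
Proof.
move=> copy; rewrite exchange_big /=; apply: eq_bigr => i _.
by rewrite -big_distrl /= (sum_twist_copy copy).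
Qed.

Lemma vertex_label_magic : magic_vertex_labeling (grid_E n) (Q_E d) vertex_label.
Proof.
split.
- move=> x y /eqP; rewrite eqn_add2l => /eqP /mixed_radix_inj eq_twist.
  apply/grid_V_eq/(twist_inj al_be (@coords_lt _ _ x) (@coords_lt _ _ y))/eq_twist;
    exact: twist_coords_lt.
- by move=> x; rewrite cardsT card_grid /vertex_label add1n mixed_radix_lt // => i; apply: twist_coords_lt.
- exists (#|Q_V d| + \sum_(i < d) (n i).-1 * (#|Q_V d| %/ 2) * radix_weight n i).
  move=> Vs Es copy; rewrite big_split /= sum1_card (card_copy copy).
  by rewrite (sum_mixed_radix_twist_copy _ copy).
Qed.

End VertexLabel.

Section EdgeLabel.
Variables (d : nat) (n : 'I_d -> nat).
Local Notation V := (grid_V n).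

(* The axis-[t] edges of the grid are the [{x, x + e_t}], with [x] ranging over the grid
   [grid_V (lower_dims n t)], whose [t]-th side is one shorter. *)
Definition axis_edge_count (t : 'I_d) := \prod_(i < d) lower_dims n t i.

Lemma lower_dims_le t i : lower_dims n t i <= n i.
Proof. by rewrite /lower_dims; case: ifP => // _; rewrite leq_pred. Qed.

Lemma coords_lower_dims (x : V) t : (x t).+1 < n t -> forall i, coords x i < lower_dims n t i.
Proof. by move=> xt i; rewrite /lower_dims /coords; case: eqP => [-> | _]; [lia | exact: ltn_ord]. Qed.

Definition lower_end t (p : grid_V (lower_dims n t)) : V := [ffun i => widen_ord (lower_dims_le t i) (p i)].

Lemma lower_endE t (p : grid_V (lower_dims n t)) i : (lower_end p i : nat) = p i.
Proof. by rewrite ffunE. Qed.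

Lemma lower_end_lt t (p : grid_V (lower_dims n t)) : (lower_end p t).+1 < n t.
Proof.
rewrite lower_endE; have := ltn_ord (p t); move: (p t : nat) => m.
by rewrite /lower_dims eqxx; lia.
Qed.

Lemma sum_axis_edge_count_le : \sum_(t < d) axis_edge_count t <= #|grid_E n|.
Proof.
pose edge_of (u : {t : 'I_d & grid_V (lower_dims n t)}) :=
  [set lower_end (tagged u); grid_succ (lower_end (tagged u)) (tag u)].
have edge_of_inj : injective edge_of.
  move=> [t p] [t' p'] /(grid_succ_set2_inj (lower_end_lt p) (lower_end_lt p')) /= [et ep].
  subst t'; congr existT; apply: grid_V_eq => i.
  by have := congr1 (fun f : V => (f i : nat)) ep; rewrite !lower_endE.
have -> : \sum_(t < d) axis_edge_count t = #|{: {t : 'I_d & grid_V (lower_dims n t)}}|.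
  rewrite card_tagged sumnE big_map big_enum /=.
  by apply: eq_bigr => t _; rewrite card_grid.
rewrite -(card_imset _ edge_of_inj); apply/subset_leq_card/subsetP => _ /imsetP [u _ ->].
exact/grid_E_set2/grid_succ_adj/lower_end_lt.
Qed.

Variable lab : 'I_d -> V -> nat.

Definition edge_label (e : {set V}) : nat :=
  if [pick p : 'I_d * V | ((p.2 p.1).+1 < n p.1) && (e == [set p.2; grid_succ p.2 p.1])] is Some p
  then lab p.1 p.2 else 0.

Lemma edge_label_succ t (x : V) : (x t).+1 < n t -> edge_label [set x; grid_succ x t] = lab t x.
Proof.
move=> xt; rewrite /edge_label; case: pickP => [[t' x'] /andP [/= xt' /eqP E] | none].
  by have [-> ->] := grid_succ_set2_inj xt xt' E.
by have := none (t, x); rewrite /= xt eqxx.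
Qed.

Lemma edge_label_magic :
  (forall t t' (x x' : V), (x t).+1 < n t -> (x' t').+1 < n t' ->
     lab t x = lab t' x' -> t = t' /\ x = x') ->
  (forall t (x : V), (x t).+1 < n t -> 1 <= lab t x <= \sum_(s < d) axis_edge_count s) ->
  (exists c, forall Vs Es, iso_subgraph (grid_E n) (Q_E d) Vs Es ->
     \sum_(t < d) \sum_(e in axis_edges Es t) edge_label e = c) ->
  magic_edge_labeling (grid_E n) (Q_E d) edge_label.
Proof.
move=> lab_inj lab_range [c sum_c]; split.
- move=> e e' /grid_E_succ [t [x [xt ->]]] /grid_E_succ [t' [x' [xt' ->]]].
  by rewrite !edge_label_succ // => /(lab_inj _ _ _ _ xt xt') [-> ->].
- move=> _ /grid_E_succ [t [x [xt ->]]]; rewrite edge_label_succ //.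
  by have := lab_range _ _ xt; have := sum_axis_edge_count_le; lia.
- by exists c => Vs Es copy; rewrite (sum_copy_edges copy) (sum_c _ _ copy).
Qed.

Lemma sum_edge_label_axis Vs Es t (H F : V -> nat) c :
  iso_subgraph (grid_E n) (Q_E d) Vs Es ->
  (forall x : V, (x t).+1 < n t ->
     2 * lab t x + (H x + H (grid_succ x t)) = F x + F (grid_succ x t) + c) ->
  2 * \sum_(e in axis_edges Es t) edge_label e + \sum_(v in Vs) H v =
  \sum_(v in Vs) F v + #|Q_V d| %/ 2 * c.
Proof.
move=> copy pair.
rewrite -(sum_axis_edges_set copy H t) -(sum_axis_edges_set copy F t).
rewrite -(card_axis_edges copy t) -sum_nat_const big_distrr -!big_split.
apply: eq_bigr => e /(axis_edge_succ copy) [x [xt ->]].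
by rewrite edge_label_succ // !big_set2 ?grid_succ_neq //; apply: pair.
Qed.

End EdgeLabel.

Section EdgeLabelHigh.
Variables (d : nat) (n : 'I_d -> nat) (al be : 'I_d -> 'I_d).
Hypotheses (al_neq : forall t, al t != t) (be_neq : forall t, be t != t)
  (al_be : forall t, al t != be t).
Local Notation V := (grid_V n).
Local Notation h := (#|Q_V d| %/ 2).

Definition axis_offset (t : 'I_d) := \sum_(s < d | s < t) axis_edge_count n s.

Definition high_label (t : 'I_d) (x : V) :=
  1 + axis_offset t + mixed_radix (lower_dims n t) (twist (lower_dims n t) (al t) (be t) (coords x)).

Lemma axis_offset_succ (t : 'I_d) :
  axis_offset t + axis_edge_count n t = \sum_(s < d | s < t.+1) axis_edge_count n s.
Proof.
rewrite [RHS](bigD1 t) //= addnC; congr (_ + _).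
by apply: eq_bigl => s; rewrite ltnS ltn_neqAle andbC.
Qed.

Lemma axis_offset_lt (t t' : 'I_d) : t < t' -> axis_offset t + axis_edge_count n t <= axis_offset t'.
Proof.
by move=> tt'; rewrite axis_offset_succ; apply: leq_sum_subpred => s /leq_trans; apply.
Qed.

Lemma axis_offset_le_sum (t : 'I_d) :
  axis_offset t + axis_edge_count n t <= \sum_(s < d) axis_edge_count n s.
Proof. by rewrite axis_offset_succ; exact: leq_sum_subpred. Qed.

Lemma high_label_lt (t : 'I_d) (x : V) : (x t).+1 < n t ->
  high_label t x <= axis_offset t + axis_edge_count n t.
Proof.
move=> xt; have := mixed_radix_lt (twist_lt (al t) (be t) (coords_lower_dims xt)).
by rewrite /high_label /axis_edge_count; lia.
Qed.

Lemma high_label_gt (t : 'I_d) (x : V) : axis_offset t < high_label t x.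
Proof. by rewrite /high_label addnAC add1n ltnS leq_addl. Qed.

Lemma high_label_inj (t t' : 'I_d) (x x' : V) : (x t).+1 < n t -> (x' t').+1 < n t' ->
  high_label t x = high_label t' x' -> t = t' /\ x = x'.
Proof.
move=> xt xt' E.
have tt' : t = t'.
  have := high_label_gt t x; have := high_label_gt t' x'.
  have := high_label_lt xt; have := high_label_lt xt'; rewrite E.
  by case: (ltngtP t t') => [lt | lt | /val_inj //]; have := axis_offset_lt lt; lia.
subst t'; split => //; move: E => /eqP; rewrite /high_label eqn_add2l => /eqP.
move=> /mixed_radix_inj eq_twist; apply/grid_V_eq/(twist_inj (al_be t)
  (coords_lower_dims xt) (coords_lower_dims xt'))/eq_twist => i;
  exact/twist_lt/coords_lower_dims.
Qed.

Lemma high_label_pair (t : 'I_d) (x : V) : (x t).+1 < n t ->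
  2 * high_label t x + radix_weight (lower_dims n t) t =
  2 * (1 + axis_offset t) + (mixed_radix (lower_dims n t) (twist n (al t) (be t) (coords x)) +
    mixed_radix (lower_dims n t) (twist n (al t) (be t) (coords (grid_succ x t)))).
Proof.
move=> xt; have [xs xt'] := coords_succ xt.
set L := lower_dims n t; set w := radix_weight L.
set T := twist L (al t) (be t) (coords x).
suff -> : mixed_radix L (twist n (al t) (be t) (coords x)) +
    mixed_radix L (twist n (al t) (be t) (coords (grid_succ x t))) = 2 * mixed_radix L T + w t.
  by rewrite /high_label -/L -/T; lia.
rewrite /mixed_radix -/w -big_split /=.
rewrite (eq_bigr (fun i => 2 * (T i * w i) + (i == t) * w i)) => [|i _]; last first.
  by rewrite -mulnDl (twist_step_other i (al_neq t) (be_neq t) xs xt') // mulnDl -mul2n mulnA.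
rewrite big_split /= -big_distrr; congr (_ + _).
by rewrite (bigD1 t) //= eqxx mul1n big1 ?addn0 // => i /negbTE ->.
Qed.

Lemma sum_high_label_axis Vs Es t : iso_subgraph (grid_E n) (Q_E d) Vs Es ->
  2 * \sum_(e in axis_edges Es t) edge_label high_label e + h * radix_weight (lower_dims n t) t =
  #|Q_V d| * (1 + axis_offset t) + \sum_(i < d) (n i).-1 * h * radix_weight (lower_dims n t) i.
Proof.
move=> copy.
have pair (x : V) : (x t).+1 < n t ->
    2 * edge_label high_label [set x; grid_succ x t] + radix_weight (lower_dims n t) t =
    (1 + axis_offset t + mixed_radix (lower_dims n t) (twist n (al t) (be t) (coords x))) +
    (1 + axis_offset t +
       mixed_radix (lower_dims n t) (twist n (al t) (be t) (coords (grid_succ x t)))).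
  by move=> xt; rewrite edge_label_succ // high_label_pair //; lia.
have := sum_axis_edges copy
  (G := fun e => 2 * edge_label high_label e + radix_weight (lower_dims n t) t) pair.
rewrite big_split [in RHS]big_split /= -big_distrr /= !sum_nat_const (card_axis_edges copy) (card_copy copy).
by rewrite (sum_mixed_radix_twist_copy (al_be t) _ copy) mulnC => ->.
Qed.

Lemma high_label_magic : magic_edge_labeling (grid_E n) (Q_E d) (edge_label high_label).
Proof.
apply: edge_label_magic => [t t' x x' | t x xt |]; first exact: high_label_inj.
  by have := high_label_gt t x; have := high_label_lt xt; have := axis_offset_le_sum t; lia.
pose K t := #|Q_V d| * (1 + axis_offset t) +
  \sum_(i < d) (n i).-1 * h * radix_weight (lower_dims n t) i - h * radix_weight (lower_dims n t) t.
exists ((\sum_(t < d) K t) %/ 2) => Vs Es copy.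
suff -> : \sum_(t < d) K t = 2 * \sum_(t < d) \sum_(e in axis_edges Es t) edge_label high_label e.
  by rewrite mulKn.
by rewrite big_distrr; apply: eq_bigr => t _; rewrite /K -(sum_high_label_axis _ copy) addnK.
Qed.

End EdgeLabelHigh.

Section EdgeLabelSquare.
Variable n : 'I_2 -> nat.
Hypothesis n_ge2 : forall i, 2 <= n i.
Local Notation V := (grid_V n).
Local Notation n0 := (n ord0).
Local Notation n1 := (n ord_max).
Local Notation N := (2 * n0 - 1).
Local Notation h := (#|Q_V 2| %/ 2).

Lemma ord2_cases (i : 'I_2) : i = ord0 \/ i = ord_max.
Proof. by case: i => [[|[|//]] ?]; [left | right]; apply: val_inj. Qed.

(* Labels come in blocks of [2 n0 - 1]: block [q] lists the [n0 - 1] edges along axis 0 at height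
   [q] by decreasing [x0], then the [n0] edges along axis 1 starting at height [n1 - 2 - q] by
   increasing [x0]. *)
Definition square_label (t : 'I_2) (x : V) : nat :=
  let x0 := coords x ord0 in let x1 := coords x ord_max in
  if t == ord0 then 1 + x1 * N + (n0 - 2 - x0) else 1 + (n1 - 2 - x1) * N + (n0 - 1 + x0).

Lemma square_label_inj t t' (x x' : V) : (coords x t).+1 < n t -> (coords x' t').+1 < n t' ->
  square_label t x = square_label t' x' -> t = t' /\ x = x'.
Proof.
have := coords_lt x ord0; have := coords_lt x ord_max.
have := coords_lt x' ord0; have := coords_lt x' ord_max; have := n_ge2 ord0.
have coords_eq : coords x ord0 = coords x' ord0 -> coords x ord_max = coords x' ord_max -> x = x'.
  by move=> e0 e1; apply: grid_V_eq => i; case: (ord2_cases i) => ->.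
case: (ord2_cases t) (ord2_cases t') => -> [] -> ? ? ? ? ? xt xt'; rewrite /square_label /= => E;
  have := congr1 (fun m => edivn m.-1 N) E; rewrite /= !edivn_eq; try lia; case=> q r.
- by split => //; apply: coords_eq; lia.
- lia.
- lia.
- by split => //; apply: coords_eq; lia.
Qed.

Lemma sum_axis_edge_count2 : \sum_(t < 2) axis_edge_count n t = n0.-1 * n1 + n0 * n1.-1.
Proof.
rewrite /axis_edge_count !big_ord_recr !big_ord0 /lower_dims /=.
have -> : widen_ord (leqnSn 1) ord_max = ord0 :> 'I_2 by apply: val_inj.
by rewrite add0n !mul1n.
Qed.

Lemma square_label_range t (x : V) : (coords x t).+1 < n t ->
  1 <= square_label t x <= \sum_(s < 2) axis_edge_count n s.
Proof.
rewrite sum_axis_edge_count2; have := coords_lt x ord0; have := coords_lt x ord_max.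
have := n_ge2 ord0; have := n_ge2 ord_max.
case: (ord2_cases t) => -> ? ? ? ? xt; rewrite /square_label /=.
- have : coords x ord_max * N <= n1.-1 * N by apply: leq_mul; lia.
  nia.
- have : (n1 - 2 - coords x ord_max) * N <= (n1 - 2) * N by apply: leq_mul; lia.
  nia.
Qed.

Lemma square_label_pair0 (x : V) : (coords x ord0).+1 < n0 ->
  2 * square_label ord0 x + (coords x ord0 + coords (grid_succ x ord0) ord0) =
  coords x ord_max * N + coords (grid_succ x ord0) ord_max * N + N.
Proof.
move=> xt; have [xs ->] := coords_succ xt; rewrite xs // /square_label /=.
by have := n_ge2 ord0; nia.
Qed.

Lemma square_label_pair1 (x : V) : (coords x ord_max).+1 < n1 ->
  2 * square_label ord_max x +
    (coords x ord_max * N + coords (grid_succ x ord_max) ord_max * N) =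
  coords x ord0 + coords (grid_succ x ord_max) ord0 + (2 * n0 + (2 * n1 - 3) * N).
Proof.
move=> xt; have [xs ->] := coords_succ xt; rewrite xs // /square_label /=.
by have := n_ge2 ord0; have := n_ge2 ord_max; nia.
Qed.

(* Summing [square_label_pair0] and [square_label_pair1] over a copy, the vertex terms cancel. *)
Lemma square_label_magic : magic_edge_labeling (grid_E n) (Q_E 2) (edge_label square_label).
Proof.
apply: edge_label_magic => [t t' x x' | t x |]; [exact: square_label_inj | exact: square_label_range|].
exists (h * (N + (2 * n0 + (2 * n1 - 3) * N)) %/ 2) => Vs Es copy.
have S0 := sum_edge_label_axis (F := fun v => coords v ord_max * N) copy square_label_pair0.
have S1 := sum_edge_label_axis (H := fun v => coords v ord_max * N) copy square_label_pair1.
rewrite !big_ord_recr big_ord0 /=.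
have -> : widen_ord (leqnSn 1) ord_max = ord0 :> 'I_2 by apply: val_inj.
set A := \sum_(e in _) _ in S0 *; set B := \sum_(e in _) _ in S1 *.
have -> : h * (N + (2 * n0 + (2 * n1 - 3) * N)) = 2 * (0 + A + B) by lia.
by rewrite mulKn.
Qed.

End EdgeLabelSquare.

Lemma grid_edge_magic_high d (n : 'I_d.+3 -> nat) :
  exists g, magic_edge_labeling (grid_E n) (Q_E d.+3) g.
Proof.
pose al (t : 'I_d.+3) : 'I_d.+3 := inord (if t == 0 :> nat then 1 else 0).
pose be (t : 'I_d.+3) : 'I_d.+3 := inord (if t == 2 :> nat then 1 else 2).
exists (edge_label (high_label al be)).
apply: high_label_magic => t; rewrite -val_eqE /= !inordK.
all: by case: (nat_of_ord t) => [|[|[|]]].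
Qed.

Theorem theorem1 (d : nat) (n : 'I_d -> nat)
  (hd : 2 <= d)
  (hmono : forall i j : 'I_d, (i <= j)%N -> n j <= n i)
  (h2 : forall i : 'I_d, 2 <= n i) :
  (exists f : grid_V n -> nat, magic_vertex_labeling (grid_E n) (Q_E d) f) /\
  (exists g : {set grid_V n} -> nat, magic_edge_labeling (grid_E n) (Q_E d) g).
Proof.
split.
  exists (@vertex_label d n (Ordinal (ltnW hd)) (Ordinal hd)).
  exact: vertex_label_magic.
case: d n hmono h2 hd => [|[|[|d]]] // n _ n_ge2 _; last exact: grid_edge_magic_high.
by exists (edge_label (@square_label n)); apply: square_label_magic.
Qed.
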